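(* With $\phi_i,\theta^*,\pi_i,\pi_i^*,\mathcal{L},u,v,\lambda_\phi$ as in the generalized linear model setting: (i) $\mathcal{L}$ is $\beta$-smooth with $\beta=\frac38\max_i\|\phi_i\|_2^2$, i.e. $|z^\top\nabla^2\mathcal{L}(\theta)z|\le\beta\|z\|_2^2$ for all $\theta,z$; (ii) for every $\theta$ with $\mathcal{L}(\theta)>0$ and every $z\in\mathbb{R}^d$, $|z^\top\nabla^2\mathcal{L}(\theta)z|\le\beta(\theta)\|z\|_2^2$, where $$\beta(\theta)=L_1(\theta)\Big\|\frac{\partial\mathcal{L}(\theta)}{\partial\theta}\Big\|_2+L_0(\theta)\,\frac{\|\partial\mathcal{L}(\theta)/\partial\theta\|_2^2}{\mathcal{L}(\theta)},$$ $$L_1(\theta)=\frac{\max_i\|\phi_i\|_2^2}{32\,(\min\{u(\theta),v\}\sqrt{\lambda_\phi})^{3/2}},\qquad L_0(\theta)=\frac{17\max_i\|\phi_i\|_2^2}{512\,u(\theta)^2\min\{u(\theta)^2,v^2\}\lambda_\phi}.$$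
   Context: Generalized linear model setting: $\phi_1,\dots,\phi_N\in\mathbb{R}^d$ (not all zero), $\theta^*\in\mathbb{R}^d$, $\sigma(z)=1/(1+e^{-z})$, $\pi_i^*=\sigma(\phi_i^\top\theta^* )$, $\pi_i=\pi_i(\theta)=\sigma(\phi_i^\top\theta)$, $\mathcal{L}(\theta)=\frac1N\sum_{i=1}^N(\pi_i-\pi_i^* )^2$, $u(\theta)=\min_i\pi_i(1-\pi_i)$, $v=\min_i\pi_i^*(1-\pi_i^* )$, $\lambda_\phi$ the smallest positive eigenvalue of $\frac1N\sum_i\phi_i\phi_i^\top$. *)

From HB Require Import structures.
From mathcomp Require Import all_boot all_order all_algebra.
From mathcomp Require Import all_classical all_reals all_analysis.
Set Implicit Arguments. Unset Strict Implicit. Unset Printing Implicit Defensive.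
Import Order.TTheory GRing.Theory Num.Theory.
Import numFieldNormedType.Exports.
Local Open Scope ring_scope.

Section GLM.
Variable R : realType.

Definition dotv (d : nat) (x y : 'rV[R]_d) : R := \sum_(j < d) x 0 j * y 0 j.
Definition nrm2sq (d : nat) (x : 'rV[R]_d) : R := dotv x x.
Definition nrm2 (d : nat) (x : 'rV[R]_d) : R := Num.sqrt (nrm2sq x).

Definition sigmoid (z : R) : R := 1 / (1 + expR (- z)).

Definition pi_i (d N : nat) (phi : 'I_N -> 'rV[R]_d) (th : 'rV[R]_d) (i : 'I_N) : R :=
  sigmoid (dotv (phi i) th).

Definition Lglm (d N : nat) (phi : 'I_N -> 'rV[R]_d) (thstar th : 'rV[R]_d) : R :=
  N%:R^-1 * \sum_(i < N) (pi_i phi th i - pi_i phi thstar i) ^+ 2.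

(* min over i of pi_i (1 - pi_i); the seed 1 is harmless since each term is <= 1/4
   and N > 0 whenever some phi_i is nonzero *)
Definition umin (d N : nat) (phi : 'I_N -> 'rV[R]_d) (th : 'rV[R]_d) : R :=
  \big[Num.min/1]_(i < N) (pi_i phi th i * (1 - pi_i phi th i)).

(* max_i ||phi_i||_2^2 (all terms are >= 0, so seed 0 is the correct neutral) *)
Definition maxphi2 (d N : nat) (phi : 'I_N -> 'rV[R]_d) : R :=
  \big[Num.max/0]_(i < N) nrm2sq (phi i).

Definition gram (d N : nat) (phi : 'I_N -> 'rV[R]_d) : 'M[R]_d :=
  N%:R^-1 *: \sum_(i < N) ((phi i)^T *m phi i).

Definition smallest_pos_eig (d : nat) (M : 'M[R]_d) (lam : R) : Prop :=
  [/\ eigenvalue M lam, 0 < lam &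
      forall mu, eigenvalue M mu -> 0 < mu -> lam <= mu].

(* z^T (Hessian of f at th) z = second derivative of t |-> f(th + t z) at t = 0 *)
Definition hessq (d : nat) (f : 'rV[R]_d -> R) (th z : 'rV[R]_d) : R :=
  derive1 (derive1 (fun t : R => f (th + t *: z))) 0.

Definition grad (d : nat) (f : 'rV[R]_d -> R) (th : 'rV[R]_d) : 'rV[R]_d :=
  \row_(j < d) derive1 (fun t : R => f (th + t *: delta_mx 0 j)) 0.

End GLM.

(* Write p = s (1 - s) for s = pi_i(theta).  Along a line theta + t z every term of
   the loss depends on t through a sigmoid of an affine function, so the Hessian
   quadratic form is an average of (phi_i . z)^2 times
   2 p (p + (pi_i - pi_i^* ) (1 - 2 pi_i)), a factor bounded by 3/8 in absolute
   value; Cauchy-Schwarz then gives the smoothness bound (i).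

   For (ii) the right-hand side already dominates the constant 3/8 max ||phi_i||^2.
   By the mean value theorem pi_i - pi_i^* = k_i phi_i . (theta - theta^* ) with
   min(p_i, p_i^* ) <= k_i <= 1/4.  Hence the half-gradient h satisfies
   <h, theta - theta^*> >= 4 u L, while (theta - theta^* )^T G (theta - theta^* ) <=
   L / min(u^2, v^2) for the Gram matrix G.  As h lies in the row space of G,
   Cauchy-Schwarz for the seminorm of G and the spectral bound
   lambda y G y^T <= y G^2 y^T yield ||grad L||^2 >= 64 u^2 min(u^2, v^2) lambda L,
   so the L_0 term alone is at least 17/8 max ||phi_i||^2. *)
From HB Require Import structures.
From mathcomp Require Import all_boot all_order all_algebra.
From mathcomp Require Import all_classical all_reals all_analysis.
From mathcomp Require Import complex sesquilinear spectral.
From mathcomp Require Import ring lra zify.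
Set Implicit Arguments. Unset Strict Implicit. Unset Printing Implicit Defensive.
Import Order.TTheory GRing.Theory Num.Theory.
Import numFieldNormedType.Exports.
Local Open Scope ring_scope.

Section Sigmoid.
Variable R : realType.
Implicit Types a b c s t x y : R.

Let scaleRE a b : a *: b = a * b. Proof. by []. Qed.

Definition bern_var s : R := s * (1 - s).

Lemma bern_var_le s : bern_var s <= 1 / 4.
Proof. by have := sqr_ge0 (s - 1 / 2); rewrite /bern_var; nra. Qed.

Lemma bern_var_ge_min a s b : a <= s -> s <= b ->
  Num.min (bern_var a) (bern_var b) <= bern_var s.
Proof.
move=> ha hb; rewrite ge_min /bern_var.
by case: (lerP (s + a) 1) => h; apply/orP; [left | right]; nra.
Qed.

Lemma sigmoid_gt0 x : 0 < sigmoid x.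
Proof. by rewrite /sigmoid div1r invr_gt0 addr_gt0 ?expR_gt0. Qed.

Lemma sigmoid_lt1 x : sigmoid x < 1.
Proof.
by rewrite /sigmoid ltr_pdivrMr ?mul1r ?ltrDl ?expR_gt0 ?addr_gt0 ?expR_gt0.
Qed.

Lemma bern_var_sigmoid_gt0 x : 0 < bern_var (sigmoid x).
Proof. by rewrite /bern_var mulr_gt0 ?sigmoid_gt0 ?subr_gt0 ?sigmoid_lt1. Qed.

Lemma sigmoid_le : {homo @sigmoid R : x y / x <= y}.
Proof.
move=> x y xy; rewrite /sigmoid !div1r lef_pV2 ?posrE ?addr_gt0 ?expR_gt0 //.
by rewrite lerD2l ler_expR lerN2.
Qed.

Lemma is_derive_sigmoid x : is_derive x 1 (@sigmoid R) (bern_var (sigmoid x)).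
Proof.
have den : is_derive x 1 (fun y : R => 1 + expR (- y)) (- expR (- x)).
  by apply: trigger_derive; rewrite add0r mul1r mulrN1.
have den_neq0 : 1 + expR (- x) != 0 by rewrite gt_eqF // addr_gt0 // expR_gt0.
have := @is_deriveV R _ x _ _ den_neq0 den; rewrite /sigmoid.
under [fun y => 1 / _]boolp.funext => y do rewrite div1r.
move=> h; apply: is_derive_eq h _.
by rewrite /bern_var !div1r scaleRE; field.
Qed.

Lemma sigmoid_mvt x y : exists2 k,
  Num.min (bern_var (sigmoid x)) (bern_var (sigmoid y)) <= k <= 1 / 4 &
  sigmoid x - sigmoid y = k * (x - y).
Proof.
wlog xy : x y / x <= y.
  move=> mvt; have [/mvt //|/ltW/mvt[k k_bnd e]] := lerP x y.
  by exists k; rewrite 1?minC // -opprB e -mulrN opprB.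
have cont : {within `[x, y], continuous (@sigmoid R)}%classic.
  apply: continuous_subspaceT => z; have [dz _] := is_derive_sigmoid z.
  exact/differentiable_continuous/derivable1_diffP.
have [c /andP[cx cy] e] :=
  MVT_segment xy (fun z _ => is_derive_sigmoid z) cont.
exists (bern_var (sigmoid c)); last by rewrite -opprB e -mulrN opprB.
rewrite bern_var_le andbT.
by apply: bern_var_ge_min; apply: sigmoid_le; rewrite ?(itvP cx) ?(itvP cy).
Qed.

Lemma sigmoid_residual_descent x y u : 0 <= u -> u <= bern_var (sigmoid x) ->
  4 * u * (sigmoid x - sigmoid y) ^+ 2 <=
    (sigmoid x - sigmoid y) * bern_var (sigmoid x) * (x - y).
Proof.
move=> u0 up; have [k /andP[k_ge k_le] ->] := sigmoid_mvt x y.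
have k0 : 0 <= k.
  by apply: le_trans k_ge; rewrite le_min !ltW ?bern_var_sigmoid_gt0.
have sq0 := sqr_ge0 (x - y).
have e1 : 0 <= k * (bern_var (sigmoid x) - u) by rewrite mulr_ge0 ?subr_ge0.
have e2 : 0 <= u * (k * (1 - 4 * k)) by rewrite !mulr_ge0 //; lra.
by nra.
Qed.

Lemma sigmoid_residual_sqr_ge x y m :
  m <= bern_var (sigmoid x) ^+ 2 -> m <= bern_var (sigmoid y) ^+ 2 ->
  m * (x - y) ^+ 2 <= (sigmoid x - sigmoid y) ^+ 2.
Proof.
move=> mx my; have [k /andP[k_ge _] ->] := sigmoid_mvt x y.
rewrite exprMn ler_wpM2r ?sqr_ge0 //.
have ler_sqr p : 0 < p -> p <= k -> p ^+ 2 <= k ^+ 2.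
  by move=> p0 pk; rewrite ler_pXn2r ?nnegrE ?(ltW p0) ?(le_trans (ltW p0)).
move: k_ge; rewrite ge_min => /orP[] hk.
  exact/(le_trans mx)/ler_sqr/hk/bern_var_sigmoid_gt0.
exact/(le_trans my)/ler_sqr/hk/bern_var_sigmoid_gt0.
Qed.

Lemma hessian_factor_le s c : 0 < s < 1 -> 0 < c < 1 ->
  `|2 * bern_var s * (bern_var s + (s - c) * (1 - 2 * s))| <= 3 / 8.
Proof.
move=> /andP[s0 s1] /andP[c0 c1]; set p := bern_var s.
have p0 : 0 <= p by rewrite /p /bern_var mulr_ge0 ?subr_ge0 ?ltW.
have p4 : p <= 1 / 4 := bern_var_le s.
(* the finer bound |p (1 - 2 s)| <= 1/8 comes from (p (1 - 2 s))^2 = p^2 (1 - 4 p) *)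
have q_le : `|p * (1 - 2 * s)| <= 1 / 8.
  rewrite -(@ler_pXn2r _ 2) ?nnegrE ?normr_ge0 ?divr_ge0 // real_normK ?num_real //.
  have -> : (p * (1 - 2 * s)) ^+ 2 = p ^+ 2 * (1 - 4 * p) by rewrite /p /bern_var; ring.
  by have := sqr_ge0 (p - 1 / 6); nra.
have r_le : `|s - c| <= 1 by rewrite ler_norml; apply/andP; split; lra.
have -> : 2 * p * (p + (s - c) * (1 - 2 * s)) =
  2 * p ^+ 2 + 2 * ((s - c) * (p * (1 - 2 * s))) by ring.
apply: le_trans (ler_normD _ _) _.
have first_le : `|2 * p ^+ 2| <= 1 / 8 by rewrite ger0_norm ?mulr_ge0 ?sqr_ge0 //; nra.
have second_le : `|2 * ((s - c) * (p * (1 - 2 * s)))| <= 1 / 4.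
  rewrite normrM [`|(s - c) * _|]normrM ger0_norm //.
  have : `|s - c| * `|p * (1 - 2 * s)| <= 1 * (1 / 8) by rewrite ler_pM ?normr_ge0.
  lra.
lra.
Qed.

Local Notation sigl a b t := (sigmoid (a + t * b)).

Lemma is_derive_sigmoid_affine a b t :
  is_derive t 1 (fun t => sigl a b t) (bern_var (sigl a b t) * b).
Proof.
have affine : is_derive t 1 (fun t => a + t * b) b.
  by apply: trigger_derive; rewrite add0r mul1r scaler0 add0r; exact: mulr1.
exact: (@is_derive1_comp R _ (fun t => a + t * b) t _ _
          (is_derive_sigmoid (a + t * b)) affine).
Qed.

Lemma is_derive_sqr_residual a b c t :
  is_derive t 1 (fun t => (sigl a b t - c) ^+ 2)
    (2 * (sigl a b t - c) * bern_var (sigl a b t) * b).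
Proof.
have sigl_der := is_derive_sigmoid_affine a b t.
by apply: trigger_derive; rewrite scaleRE; ring.
Qed.

Lemma is_derive_sqr_residual_slope a b c t :
  is_derive t 1 (fun t => 2 * (sigl a b t - c) * bern_var (sigl a b t) * b)
    (2 * b ^+ 2 * bern_var (sigl a b t) *
      (bern_var (sigl a b t) + (sigl a b t - c) * (1 - 2 * sigl a b t))).
Proof.
have sigl_der := is_derive_sigmoid_affine a b t.
by apply: trigger_derive; rewrite !scaleRE /bern_var; ring.
Qed.

Lemma derive1_mean n (f df : 'I_n -> R -> R) :
  (forall i t, is_derive t 1 (f i) (df i t)) ->
  derive1 (fun t => n%:R^-1 * \sum_(i < n) f i t) =
    (fun t => n%:R^-1 * \sum_(i < n) df i t).
Proof.
move=> f_der; apply/boolp.funext => t; rewrite derive1E.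
have : is_derive t 1 (\sum_(i < n) f i) (\sum_(i < n) df i t) by apply: is_derive_sum.
rewrite fct_sumE => sum_der.
by have [_ ->] := is_deriveZ n%:R^-1 sum_der.
Qed.

End Sigmoid.

Section Euclid.
Variables (R : realType) (d : nat).
Implicit Types x y z : 'rV[R]_d.

Lemma dotv_mx x y : dotv x y = (x *m y^T) 0 0.
Proof. by rewrite /dotv mxE; apply: eq_bigr => j _; rewrite mxE. Qed.

Lemma dotvDZ x y z (t : R) : dotv x (y + t *: z) = dotv x y + t * dotv x z.
Proof.
rewrite /dotv mulr_sumr -big_split /=; apply: eq_bigr => j _.
by rewrite !mxE mulrDr mulrCA.
Qed.

Lemma dotvB x y z : dotv x (y - z) = dotv x y - dotv x z.
Proof. by rewrite /dotv -sumrB; apply: eq_bigr => j _; rewrite !mxE mulrBr. Qed.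

Lemma nrm2sq_ge0 x : 0 <= nrm2sq x.
Proof. by rewrite sumr_ge0 // => j _; rewrite -expr2 sqr_ge0. Qed.

Lemma nrm2sq_eq0 x : nrm2sq x = 0 -> x = 0.
Proof.
move=> /psumr_eq0P x0; apply/rowP => j; rewrite mxE; apply/eqP.
rewrite -[_ == 0]orbb -mulf_eq0; apply/eqP/x0 => // k _.
by rewrite -expr2 sqr_ge0.
Qed.

Lemma dotv_sqr_le x y : dotv x y ^+ 2 <= nrm2sq x * nrm2sq y.
Proof.
set a := nrm2sq x; set b := dotv x y; set c := nrm2sq y.
have sum_sqr : a * (a * c - b ^+ 2) = \sum_(j < d) (a * y 0 j - b * x 0 j) ^+ 2.
  rewrite (eq_bigr (fun j => a ^+ 2 * (y 0 j * y 0 j) - 2 * a * b * (x 0 j * y 0 j)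
                              + b ^+ 2 * (x 0 j * x 0 j))); last by move=> j _; ring.
  rewrite big_split sumrB -!mulr_sumr /= -/(dotv y y) -/(dotv x y) -/(dotv x x).
  by rewrite -/(nrm2sq y) -/(nrm2sq x) -/a -/b -/c; ring.
have := nrm2sq_ge0 x; rewrite le_eqVlt => /orP[/eqP/esym/nrm2sq_eq0 x0 | a_gt0].
  by rewrite /b /a x0 /nrm2sq /dotv !big1 ?expr0n ?mul0r // => j _; rewrite mxE mul0r.
have : 0 <= a * (a * c - b ^+ 2) by rewrite sum_sqr sumr_ge0 // => j _; rewrite sqr_ge0.
by rewrite pmulr_rge0 // subr_ge0.
Qed.

End Euclid.

Section NormalQuadraticForm.
Local Open Scope sesquilinear_scope.
Variables (C : numClosedFieldType) (n : nat).
Implicit Types (A P : 'M[C]_n) (D x : 'rV[C]_n).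

Lemma quad_conj_diag P D x :
  (x *m (P ^t* *m diag_mx D *m P) *m x ^t* ) 0 0 =
  \sum_k D 0 k * ((x *m P ^t* ) 0 k * ((x *m P ^t* ) 0 k)^* ).
Proof.
have -> : x *m (P ^t* *m diag_mx D *m P) *m x ^t* =
          x *m P ^t* *m diag_mx D *m (x *m P ^t* ) ^t*.
  by rewrite trmx_mul map_mxM trmxCK !mulmxA.
rewrite mul_mx_diag mxE; apply: eq_bigr => k _.
by rewrite !mxE mulrAC mulrC.
Qed.

Lemma eigenvalue_spectral_diag A k :
  A \is normalmx -> eigenvalue A (spectral_diag A 0 k).
Proof.
move=> /orthomx_spectralP A_eq; set P := spectralmx A.
have PPt : P *m P ^t* = 1%:M by apply/unitarymxP/spectral_unitarymx.
apply/eigenvalueP; exists (row k P).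
  rewrite -row_mul; have -> : P *m A = diag_mx (spectral_diag A) *m P.
    by rewrite [in LHS]A_eq !mulmxA mulmxV ?mul1mx // spectral_unit.
  by rewrite mul_diag_mx; apply/rowP => j; rewrite !mxE.
apply/eqP => Pk0; have := congr1 (row k) PPt.
rewrite row_mul Pk0 mul0mx => /rowP /(_ k); rewrite !mxE eqxx /=.
by move=> /eqP; rewrite eq_sym oner_eq0.
Qed.

Lemma normalmx_quad_le A lam x : A \is normalmx ->
  (forall k, 0 <= spectral_diag A 0 k * (spectral_diag A 0 k - lam)) ->
  lam * (x *m A *m x ^t* ) 0 0 <= (x *m A *m A *m x ^t* ) 0 0.
Proof.
move=> /orthomx_spectralP A_eq D_ge0.
set P := spectralmx A in A_eq; set D := spectral_diag A in A_eq D_ge0.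
have {}A_eq : A = P ^t* *m diag_mx D *m P.
  by rewrite [LHS]A_eq invmx_unitary ?spectral_unitarymx.
have PPt : P *m P ^t* = 1%:M by apply/unitarymxP/spectral_unitarymx.
have AA : A *m A = P ^t* *m diag_mx (\row_k (D 0 k * D 0 k)) *m P.
  by rewrite A_eq -mulmx_diag !mulmxA -(mulmxA _ P) PPt mulmx1.
rewrite -(mulmxA x A A) AA A_eq !quad_conj_diag mulr_sumr -subr_ge0 -sumrB.
apply: sumr_ge0 => k _; rewrite mxE -mulrA -mulrBl mulrCA mulrA.
exact/mulr_ge0/mul_conjC_ge0/D_ge0.
Qed.

End NormalQuadraticForm.

Section RealSpectralBound.
Local Open Scope sesquilinear_scope.
Local Open Scope complex_scope.
Variables (R : realType) (n : nat).
Local Notation toC := (map_mx (real_complex R)).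

Let conj_real_complex (a : R) : Num.conj a%:C = a%:C.
Proof. by apply: conj_Creal; apply/complex_realP; exists a. Qed.

Lemma eigenvalue_map_complex (G : 'M[R]_n) a :
  eigenvalue (toC G) a%:C -> eigenvalue G a.
Proof.
rewrite /eigenvalue /eigenspace -!mxrank_eq0 !mxrank_ker.
by rewrite -map_scalar_mx -map_mxB mxrank_map.
Qed.

Lemma smallest_pos_eig_quad_le (G : 'M[R]_n) lam (y : 'rV[R]_n) :
  G^T = G -> smallest_pos_eig G lam ->
  (lam * (y *m G *m y^T) 0 0 <= (y *m G *m G *m y^T) 0 0)%R.
Proof.
move=> G_sym [_ lam_gt0 lam_min].
have GC_sym : (toC G) ^t* = toC G.
  by apply/matrixP => i j; rewrite !mxE conj_real_complex -[in RHS]G_sym mxE.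
have D_real : spectral_diag (toC G) \is a realmx.
  by apply: hermitian_spectral_diag_real; apply/is_hermitianmxP; rewrite expr0 scale1r GC_sym.
have D_ge0 k : (0 <= spectral_diag (toC G) 0 k * (spectral_diag (toC G) 0 k - lam%:C))%R.
  have [a Da] := complex_realP _ (mxOverP D_real 0 k).
  have eig_a : eigenvalue G a.
    by apply: eigenvalue_map_complex; rewrite -Da eigenvalue_spectral_diag //; apply/normalmxP; rewrite GC_sym.
  rewrite Da -rmorphB -rmorphM ler0c.
  have [a_le0|a_gt0] := lerP a 0.
    by rewrite mulr_le0 // subr_le0 (le_trans a_le0) // ltW.
  by rewrite mulr_ge0 ?subr_ge0 ?(ltW a_gt0) ?lam_min.
have yC_adj : (toC y) ^t* = (toC y)^T.
  by apply/matrixP => i j; rewrite !mxE conj_real_complex.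
have quadC M : ((y *m M *m y^T) 0 0)%:C = (toC y *m toC M *m (toC y) ^t* ) 0 0.
  by rewrite yC_adj map_trmx -!map_mxM [RHS]mxE.
rewrite -lecR rmorphM /= -(mulmxA y G G) !quadC map_mxM mulmxA.
by apply: normalmx_quad_le => //; apply/normalmxP; rewrite GC_sym.
Qed.

End RealSpectralBound.

Lemma submx_gram (R : realType) m n (A : 'M[R]_(m, n)) : (A <= A^T *m A)%MS.
Proof.
rewrite -(geq_leqif (mxrank_leqif_sup (submxMl _ _))).
set K := kermx (A^T *m A).
(* B B^T = K (A^T A) K^T = 0 for B = K A^T, which forces B = 0 over the reals *)
have KAt0 : K *m A^T = 0.
  set B := K *m A^T.
  have BBt : B *m B^T = 0.
    by rewrite /B trmx_mul trmxK mulmxA -(mulmxA K) mulmx_ker mul0mx.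
  clearbody B; apply/matrixP => i j; rewrite [RHS]mxE.
  move: BBt => /matrixP /(_ i i) /eqP; rewrite !mxE psumr_eq0 => [|k _].
    by move=> /allP /(_ j (mem_index_enum _)); rewrite mxE -expr2 sqrf_eq0 => /eqP.
  by rewrite mxE -expr2 sqr_ge0.
have : (K <= kermx A^T)%MS by apply/sub_kermxP.
move/mxrankS; rewrite !mxrank_ker mxrank_tr.
have := rank_leq_col A; have := rank_leq_row (A^T *m A).
by set r := \rank (A^T *m A); set s := \rank A; lia.
Qed.

Lemma le_scaled_ratio (R : realFieldType) (M u mu lam l H : R) :
  0 <= M -> 0 < u -> 0 < mu -> 0 < lam -> 0 < l ->
  64 * u ^+ 2 * mu * lam * l <= H ->
  3 / 8 * M <= 17 * M / (512 * u ^+ 2 * mu * lam) * H / l.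
Proof.
move=> M0 u_gt0 mu_gt0 lam_gt0 l_gt0 H_ge.
set D := 512 * u ^+ 2 * mu * lam.
have D_gt0 : 0 < D.
  apply: mulr_gt0 lam_gt0; apply: mulr_gt0 mu_gt0.
  by apply: mulr_gt0; [rewrite ltr0n | exact: exprn_gt0].
have ratio_ge : 1 / 8 <= H / (D * l).
  rewrite ler_pdivlMr ?(mulr_gt0 D_gt0 l_gt0) //; apply: le_trans H_ge.
  by rewrite le_eqVlt; apply/orP; left; apply/eqP; rewrite /D; field.
have -> : 17 * M / D * H / l = 17 * M * (H / (D * l)) by field; rewrite !gt_eqF.
have := ler_wpM2l (mulr_ge0 (ler0n _ 17) M0) ratio_ge.
lra.
Qed.

Section GLMLoss.
Variables (R : realType) (d N : nat) (phi : 'I_N -> 'rV[R]_d) (thstar : 'rV[R]_d).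
Implicit Types th w y z : 'rV[R]_d.

Local Notation L := (Lglm phi thstar).
Local Notation G := (gram phi).

Lemma pi_i_bounds th i : 0 < pi_i phi th i < 1.
Proof. by rewrite sigmoid_gt0 sigmoid_lt1. Qed.

Lemma umin_le th i : umin phi th <= bern_var (pi_i phi th i).
Proof. exact: bigmin_le. Qed.

Lemma umin_gt0 th : 0 < umin phi th.
Proof.
rewrite /umin; elim/big_ind: _ => // [x y x0 y0|i _]; first by rewrite lt_min x0 y0.
exact: bern_var_sigmoid_gt0.
Qed.

Lemma maxphi2_ge i : nrm2sq (phi i) <= maxphi2 phi.
Proof. exact: le_bigmax. Qed.

Lemma maxphi2_ge0 : 0 <= maxphi2 phi.
Proof.
rewrite /maxphi2; elim/big_ind: _ => // [x y x0 y0|i _]; last exact: nrm2sq_ge0.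
by rewrite le_max x0.
Qed.

Lemma Lglm_line th z :
  (fun t => L (th + t *: z)) =
  (fun t => N%:R^-1 * \sum_(i < N)
     (sigmoid (dotv (phi i) th + t * dotv (phi i) z) - pi_i phi thstar i) ^+ 2).
Proof.
by apply/boolp.funext => t; rewrite /Lglm /pi_i; under eq_bigr do rewrite dotvDZ.
Qed.

Lemma hessq_Lglm th z :
  hessq L th z = N%:R^-1 * \sum_(i < N) dotv (phi i) z ^+ 2 *
    (2 * bern_var (pi_i phi th i) * (bern_var (pi_i phi th i) +
      (pi_i phi th i - pi_i phi thstar i) * (1 - 2 * pi_i phi th i))).
Proof.
rewrite /hessq Lglm_line (derive1_mean (fun i t => is_derive_sqr_residual _ _ _ t)).
rewrite (derive1_mean (fun i t => is_derive_sqr_residual_slope _ _ _ t)).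
by congr (_ * _); apply: eq_bigr => i _; rewrite /pi_i mul0r addr0; ring.
Qed.

Lemma hessq_Lglm_le th z : (0 < N)%N ->
  `|hessq L th z| <= 3 / 8 * maxphi2 phi * nrm2sq z.
Proof.
move=> N_gt0; rewrite hessq_Lglm normrM ger0_norm ?invr_ge0 ?ler0n //.
set M := 3 / 8 * maxphi2 phi * nrm2sq z.
have -> : M = N%:R^-1 * \sum_(i < N) M.
  by rewrite sumr_const card_ord -[M *+ N]mulr_natl mulrA mulVf ?mul1r // pnatr_eq0 -lt0n.
rewrite ler_wpM2l ?invr_ge0 ?ler0n //; apply: le_trans (ler_norm_sum _ _ _) _.
apply: ler_sum => i _; rewrite normrM ger0_norm ?sqr_ge0 //.
have := hessian_factor_le (pi_i_bounds th i) (pi_i_bounds thstar i).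
move=> /(ler_wpM2l (sqr_ge0 (dotv (phi i) z))) /le_trans; apply.
rewrite mulrC /M -[3 / 8 * _ * _]mulrA ler_wpM2l ?divr_ge0 //.
by apply: le_trans (dotv_sqr_le _ _) _; rewrite ler_wpM2r ?nrm2sq_ge0 ?maxphi2_ge.
Qed.

Definition half_grad th : 'rV[R]_d := N%:R^-1 *: \sum_(i < N)
  ((pi_i phi th i - pi_i phi thstar i) * bern_var (pi_i phi th i)) *: phi i.

Lemma grad_Lglm th : grad L th = 2 *: half_grad th.
Proof.
apply/rowP => j; rewrite !mxE Lglm_line.
rewrite (derive1_mean (fun i t => is_derive_sqr_residual _ _ _ t)) summxE mulrCA.
congr (_ * _); rewrite mulr_sumr; apply: eq_bigr => i _.
have -> : dotv (phi i) (delta_mx 0 j) = phi i 0 j.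
  rewrite /dotv (bigD1 j) //= big1 ?addr0; first by rewrite mxE !eqxx mulr1.
  by move=> k kj; rewrite mxE (negbTE kj) andbF mulr0.
by rewrite !mxE /pi_i mul0r addr0; ring.
Qed.

Definition design_mx : 'M[R]_(N, d) := \matrix_(i, j) phi i 0 j.

Lemma dotv_design_mx y i : dotv (phi i) y = (design_mx *m y^T) i 0.
Proof. by rewrite mxE; apply: eq_bigr => j _; rewrite !mxE. Qed.

Lemma half_grad_mx th : half_grad th = N%:R^-1 *:
  \row_i ((pi_i phi th i - pi_i phi thstar i) * bern_var (pi_i phi th i)) *m design_mx.
Proof.
apply/rowP => j; rewrite -scalemxAl !mxE summxE; congr (_ * _).
by apply: eq_bigr => i _; rewrite !mxE.
Qed.

Lemma dotv_half_grad th w : dotv (half_grad th) w = N%:R^-1 * \sum_(i < N)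
  (pi_i phi th i - pi_i phi thstar i) * bern_var (pi_i phi th i) * dotv (phi i) w.
Proof.
rewrite half_grad_mx dotv_mx -mulmxA -scalemxAl mxE; congr (_ * _).
by rewrite mxE; apply: eq_bigr => i _; rewrite dotv_design_mx mxE.
Qed.

Lemma gramE : G = N%:R^-1 *: (design_mx^T *m design_mx).
Proof.
rewrite /gram; congr (_ *: _); apply/matrixP => j k.
rewrite summxE !mxE; apply: eq_bigr => i _; rewrite !mxE big_ord1 !mxE.
by rewrite !ord1.
Qed.

Lemma gram_sym : G^T = G.
Proof. by rewrite gramE linearZ /= trmx_mul trmxK. Qed.

Lemma gram_quad y w :
  (y *m G *m w^T) 0 0 = N%:R^-1 * \sum_(i < N) dotv (phi i) y * dotv (phi i) w.
Proof.
rewrite gramE -scalemxAr -scalemxAl mxE; congr (_ * _).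
rewrite mulmxA -(mulmxA (y *m design_mx^T)) mxE; apply: eq_bigr => i _.
rewrite -dotv_design_mx; congr (_ * _).
by rewrite /dotv mxE; apply: eq_bigr => j _; rewrite !mxE mulrC.
Qed.

Lemma dotv_gram_sqr_le y w :
  dotv (y *m G) w ^+ 2 <= (y *m G *m y^T) 0 0 * (w *m G *m w^T) 0 0.
Proof.
rewrite dotv_mx !gram_quad mulrACA exprMn [N%:R^-1 ^+ 2]expr2.
rewrite ler_wpM2l ?mulr_ge0 ?invr_ge0 ?ler0n //.
have row_dotv (a b : 'I_N -> R) :
  dotv (\row_i a i) (\row_i b i) = \sum_(i < N) a i * b i.
  by apply: eq_bigr => i _; rewrite !mxE.
have := dotv_sqr_le (\row_i dotv (phi i) y) (\row_i dotv (phi i) w).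
by rewrite /nrm2sq !row_dotv.
Qed.

Lemma half_grad_gram_row th : (0 < N)%N -> exists y, half_grad th = y *m G.
Proof.
move=> N_gt0; have /submxP[D hD] : (half_grad th <= design_mx^T *m design_mx)%MS.
  by rewrite half_grad_mx (submx_trans (submxMl _ _) (submx_gram _)).
exists (N%:R *: D); rewrite hD gramE -scalemxAr -scalemxAl scalerA mulVf ?scale1r //.
by rewrite pnatr_eq0 -lt0n.
Qed.

Lemma Lglm_ge_dotv_half_grad th :
  4 * umin phi th * L th <= dotv (half_grad th) (th - thstar).
Proof.
rewrite dotv_half_grad /Lglm mulrCA ler_wpM2l ?invr_ge0 ?ler0n // mulr_sumr.
apply: ler_sum => i _; rewrite dotvB.
by apply: sigmoid_residual_descent; rewrite ?umin_le // ltW ?umin_gt0.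
Qed.

Lemma gram_quad_le_Lglm th :
  Num.min (umin phi th ^+ 2) (umin phi thstar ^+ 2) *
    ((th - thstar) *m G *m (th - thstar)^T) 0 0 <= L th.
Proof.
rewrite gram_quad /Lglm mulrCA ler_wpM2l ?invr_ge0 ?ler0n // mulr_sumr.
apply: ler_sum => i _; rewrite -expr2 dotvB.
have sqr_le th' : umin phi th' ^+ 2 <= bern_var (pi_i phi th' i) ^+ 2.
  by rewrite ler_pXn2r ?nnegrE ?umin_le ?ltW ?umin_gt0 ?bern_var_sigmoid_gt0.
by apply: sigmoid_residual_sqr_ge; rewrite ge_min sqr_le ?orbT.
Qed.

Lemma gram_quad_ge0 y : 0 <= (y *m G *m y^T) 0 0.
Proof.
rewrite gram_quad mulr_ge0 ?invr_ge0 ?ler0n ?sumr_ge0 // => i _.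
by rewrite -expr2 sqr_ge0.
Qed.

Lemma nrm2sq_grad_Lglm_ge th lam : (0 < N)%N -> smallest_pos_eig G lam -> 0 < L th ->
  64 * umin phi th ^+ 2 * Num.min (umin phi th ^+ 2) (umin phi thstar ^+ 2) * lam
    * L th <= nrm2sq (grad L th).
Proof.
move=> N_gt0 G_lam L_gt0; have lam_gt0 : 0 < lam by case: G_lam.
set u := umin phi th; set mu := Num.min _ _; set w := th - thstar.
have [y hy] := half_grad_gram_row th N_gt0.
have u_gt0 : 0 < u := umin_gt0 th.
have mu_gt0 : 0 < mu by rewrite lt_min !exprn_gt0 ?umin_gt0.
have descent : 4 * u * L th <= dotv (half_grad th) w := Lglm_ge_dotv_half_grad th.
have W_le : mu * (w *m G *m w^T) 0 0 <= L th := gram_quad_le_Lglm th.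
have cs : dotv (half_grad th) w ^+ 2 <= (y *m G *m y^T) 0 0 * (w *m G *m w^T) 0 0.
  by rewrite hy dotv_gram_sqr_le.
have spec : lam * (y *m G *m y^T) 0 0 <= nrm2sq (half_grad th).
  rewrite hy /nrm2sq dotv_mx trmx_mul gram_sym !mulmxA.
  exact: smallest_pos_eig_quad_le gram_sym G_lam.
have -> : nrm2sq (grad L th) = 4 * nrm2sq (half_grad th).
  by rewrite grad_Lglm /nrm2sq /dotv mulr_sumr; apply: eq_bigr => j _; rewrite !mxE; ring.
have := gram_quad_ge0 y; have := gram_quad_ge0 w.
set Q := (y *m G *m y^T) 0 0 in cs spec *; set W := (w *m G *m w^T) 0 0 in W_le cs *.
set H := nrm2sq _ in spec *.
move=> W0 Q0; rewrite -(ler_pM2r L_gt0).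
have sqr_le : (4 * u * L th) ^+ 2 <= Q * W.
  have lhs_ge0 : 0 <= 4 * u * L th.
    exact: mulr_ge0 (mulr_ge0 (ler0n _ 4) (ltW u_gt0)) (ltW L_gt0).
  by apply: le_trans cs; rewrite ler_pXn2r ?nnegrE ?(le_trans lhs_ge0 descent).
have prod_le : lam * Q * (mu * W) <= H * L th.
  exact: ler_pM (mulr_ge0 (ltW lam_gt0) Q0) (mulr_ge0 (ltW mu_gt0) W0) spec W_le.
have := ler_wpM2l (ltW (mulr_gt0 lam_gt0 mu_gt0)) sqr_le.
by nra.
Qed.

End GLMLoss.

Theorem lemma10 (R : realType) (d N : nat) (phi : 'I_N -> 'rV[R]_d)
  (thstar : 'rV[R]_d) (lam : R) :
  (exists i, phi i != 0) ->
  smallest_pos_eig (gram phi) lam ->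
  let L := Lglm phi thstar in
  let v := umin phi thstar in
  let beta := 3 / 8 * maxphi2 phi in
  let L1 := fun th : 'rV[R]_d =>
    maxphi2 phi / (32 * (Num.min (umin phi th) v * Num.sqrt lam) `^ (3 / 2)) in
  let L0 := fun th : 'rV[R]_d =>
    17 * maxphi2 phi /
      (512 * umin phi th ^+ 2 * Num.min (umin phi th ^+ 2) (v ^+ 2) * lam) in
  (forall th z : 'rV[R]_d, `|hessq L th z| <= beta * nrm2sq z) /\
  (forall th : 'rV[R]_d, 0 < L th ->
     forall z : 'rV[R]_d,
       `|hessq L th z| <=
         (L1 th * nrm2 (grad L th) + L0 th * nrm2 (grad L th) ^+ 2 / L th)
           * nrm2sq z).
Proof.
move=> [i0 _] G_lam L v beta L1 L0.
have N_gt0 : (0 < N)%N by apply: leq_ltn_trans (ltn_ord i0).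
split=> [th z | th L_gt0 z]; first exact: hessq_Lglm_le.
apply: le_trans (hessq_Lglm_le _ _ _ _ N_gt0) _.
rewrite ler_wpM2r ?nrm2sq_ge0 //; apply: ler_wpDl.
  by rewrite mulr_ge0 ?sqrtr_ge0 // divr_ge0 ?maxphi2_ge0 // mulr_ge0 ?powR_ge0.
apply: le_scaled_ratio; rewrite ?maxphi2_ge0 ?umin_gt0 ?lt_min ?exprn_gt0 ?umin_gt0 //.
  by case: G_lam.
by rewrite /nrm2 sqr_sqrtr ?nrm2sq_ge0 // nrm2sq_grad_Lglm_ge.
Qed.
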